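(* For every $n\ge2$ and all integers $n_a\ge n_b\ge1$ with $n_a+n_b=n$, $$\mathcal{C}(T^{mb}_n)\le \mathcal{C}(T^{mb}_{n_a})+\mathcal{C}(T^{mb}_{n_b})+n_a-n_b.$$
   Context: Bifurcating trees: rooted trees in which every internal node has exactly two children; considered up to isomorphism. For a node $w$ of $T$, $\kappa_T(w)$ is its number of descendant leaves. The Colless index is $\mathcal{C}(T)=\sum_{v}|\kappa_T(v_1)-\kappa_T(v_2)|$, summed over internal nodes $v$ with children $v_1,v_2$. An internal node is balanced if the numbers of descendant leaves of its two children differ by at most 1. A bifurcating tree is maximally balanced if all its internal nodes are balanced; for each $n\ge1$ there is a unique such tree with $n$ leaves, denoted $T^{mb}_n$, and for $n\ge2$ its two subtrees rooted at the children of the root are $T^{mb}_{\lceil n/2\rceil}$ and $T^{mb}_{\lfloor n/2\rfloor}$. *)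

From Stdlib Require Import Arith.

(* Rooted bifurcating trees (plane representatives; Colless index and
   maximal balance are invariant under isomorphism). *)
Inductive btree : Type :=
| Leaf : btree
| Node : btree -> btree -> btree.

Fixpoint leaves (t : btree) : nat :=
  match t with
  | Leaf => 1
  | Node l r => leaves l + leaves r
  end.

Definition absdiff (a b : nat) : nat := (a - b) + (b - a).

Fixpoint colless (t : btree) : nat :=
  match t with
  | Leaf => 0
  | Node l r => absdiff (leaves l) (leaves r) + colless l + colless r
  end.

Fixpoint max_balanced (t : btree) : Prop :=
  match t with
  | Leaf => True
  | Node l r => absdiff (leaves l) (leaves r) <= 1
                /\ max_balanced l /\ max_balanced r
  end.

From Stdlib Require Import Arith Lia.

(* Every maximally balanced tree with n >= 2 leaves splits at the root into
   maximally balanced trees with ceil(n/2) and floor(n/2) leaves, so its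
   Colless index depends only on n; we compute it by the recursive function
   [colless_mb].  Writing [join_cost a b] for the imbalance |a - b| created
   by a root joining subtrees with a and b leaves (0 when one side is empty,
   i.e. when there is no root), the recursion reads
     colless_mb (a + b) = join_cost a b + colless_mb a + colless_mb b
   for every balanced split |a - b| <= 1.
   The theorem is the inequality
     colless_mb (a + b) <= colless_mb a + colless_mb b + join_cost a b,
   proved for ALL a, b by strong induction on a + b: halve a = a1 + a2 and
   b = b1 + b2 in opposite directions, so that a + b = (a1+b1) + (a2+b2) is
   again a balanced split; induction on the two halves then reduces the claim
   to a purely arithmetic inequality between join costs ([join_cost_exchange]).
   Allowing empty sides removes all special cases (such as n_b = 1). *)

Definition join_cost (a b : nat) : nat :=
  match a, b with
  | 0, _ | _, 0 => 0
  | _, _ => absdiff a b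
  end.

Lemma join_cost_comm a b : join_cost a b = join_cost b a.
Proof. destruct a, b; unfold join_cost, absdiff; lia. Qed.

Lemma join_cost_pos a b : 1 <= a -> 1 <= b -> join_cost a b = absdiff a b.
Proof. destruct a, b; now try lia. Qed.

(* Case description of [join_cost], in a form usable by linear arithmetic. *)
Lemma join_cost_cases a b :
  ((a = 0 \/ b = 0) /\ join_cost a b = 0)
  \/ (1 <= a /\ 1 <= b /\ join_cost a b = (a - b) + (b - a)).
Proof. destruct a, b; [left; auto .. | right; cbn [join_cost]; unfold absdiff; lia]. Qed.

(* When all parts are
   nonempty this is the identity |x - 1| + |x| = |2x - 1| for x = a2 - b1. *)
Lemma join_cost_exchange a1 a2 b1 b2 :
  a2 <= a1 <= a2 + 1 -> b1 <= b2 <= b1 + 1 ->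
  join_cost (a1 + b1) (a2 + b2) + join_cost a1 b1 + join_cost a2 b2
  <= join_cost a1 a2 + join_cost b1 b2 + join_cost (a1 + a2) (b1 + b2).
Proof.
  intros Ha Hb.
  destruct (join_cost_cases (a1 + b1) (a2 + b2)) as [[? ->] | (? & ? & ->)];
  destruct (join_cost_cases a1 b1) as [[? ->] | (? & ? & ->)];
  destruct (join_cost_cases a2 b2) as [[? ->] | (? & ? & ->)];
  destruct (join_cost_cases a1 a2) as [[? ->] | (? & ? & ->)];
  destruct (join_cost_cases b1 b2) as [[? ->] | (? & ? & ->)];
  destruct (join_cost_cases (a1 + a2) (b1 + b2)) as [[? ->] | (? & ? & ->)];
  lia.
Qed.

Lemma half_bounds n : 2 * (n / 2) <= n <= 2 * (n / 2) + 1.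
Proof.
  pose proof (Nat.div_mod_eq n 2). pose proof (Nat.mod_upper_bound n 2). lia.
Qed.

(* The Colless index of the maximally balanced tree with n leaves, computed
   with fuel k (sufficient when n <= k). *)
Fixpoint colless_mb_fuel (k n : nat) : nat :=
  match k with
  | 0 => 0
  | S k' =>
      if n <=? 1 then 0
      else join_cost (n - n / 2) (n / 2)
           + colless_mb_fuel k' (n - n / 2) + colless_mb_fuel k' (n / 2)
  end.

Definition colless_mb (n : nat) : nat := colless_mb_fuel n n.

Lemma colless_mb_fuel_enough k1 k2 n :
  n <= k1 -> n <= k2 -> colless_mb_fuel k1 n = colless_mb_fuel k2 n.
Proof.
  revert k2 n; induction k1 as [|k1 IH]; intros k2 n H1 H2.
  - replace n with 0 by lia. now destruct k2.
  - destruct k2 as [|k2]; [replace n with 0 by lia; reflexivity|].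
    cbn [colless_mb_fuel]. destruct (Nat.leb_spec n 1); [reflexivity|].
    pose proof (half_bounds n).
    rewrite (IH k2 (n - n / 2)), (IH k2 (n / 2)) by lia. reflexivity.
Qed.

Lemma colless_mb_small n : n <= 1 -> colless_mb n = 0.
Proof. intros H. destruct n as [|[|n]]; reflexivity || lia. Qed.

Lemma colless_mb_halves n : 2 <= n ->
  colless_mb n = join_cost (n - n / 2) (n / 2)
                 + colless_mb (n - n / 2) + colless_mb (n / 2).
Proof.
  intros H. unfold colless_mb. destruct n as [|k]; [lia|].
  cbn [colless_mb_fuel]. destruct (Nat.leb_spec (S k) 1); [lia|].
  pose proof (half_bounds (S k)).
  rewrite (colless_mb_fuel_enough k (S k - S k / 2)),
          (colless_mb_fuel_enough k (S k / 2)) by lia.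
  reflexivity.
Qed.

Lemma colless_mb_balanced_split a b : absdiff a b <= 1 ->
  colless_mb (a + b) = join_cost a b + colless_mb a + colless_mb b.
Proof.
  unfold absdiff; intros Hab.
  destruct (Nat.le_gt_cases (a + b) 1).
  - rewrite !colless_mb_small by lia. destruct a, b; reflexivity || lia.
  - rewrite colless_mb_halves by lia. pose proof (half_bounds (a + b)).
    assert (Hsplit : (a = a + b - (a + b) / 2 /\ b = (a + b) / 2)
                     \/ (a = (a + b) / 2 /\ b = a + b - (a + b) / 2)) by lia.
    destruct Hsplit as [[Ea Eb] | [Ea Eb]].
    + rewrite <- Ea, <- Eb. lia.
    + rewrite <- Eb, <- Ea, join_cost_comm. lia.
Qed.

Lemma leaves_pos t : 1 <= leaves t.
Proof. induction t; simpl; lia. Qed.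

Lemma colless_max_balanced t : max_balanced t -> colless t = colless_mb (leaves t).
Proof.
  induction t as [|l IHl r IHr]; [reflexivity|].
  intros (Hbal & Hl & Hr). cbn [colless leaves].
  rewrite colless_mb_balanced_split, join_cost_pos, IHl, IHr
    by auto using leaves_pos.
  lia.
Qed.

Lemma colless_mb_join a b :
  colless_mb (a + b) <= colless_mb a + colless_mb b + join_cost a b.
Proof.
  remember (a + b) as n eqn:En. revert a b En.
  induction n as [n IH] using lt_wf_ind; intros a b En.
  destruct (Nat.le_gt_cases n 1).
  - subst n. rewrite colless_mb_small by lia. lia.
  - pose proof (half_bounds a). pose proof (half_bounds b).
    set (a1 := a - a / 2); set (a2 := a / 2).
    set (b1 := b / 2); set (b2 := b - b / 2).
    assert (Ha : colless_mb a = join_cost a1 a2 + colless_mb a1 + colless_mb a2).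
    { replace a with (a1 + a2) at 1 by lia.
      apply colless_mb_balanced_split; unfold absdiff; lia. }
    assert (Hb : colless_mb b = join_cost b1 b2 + colless_mb b1 + colless_mb b2).
    { replace b with (b1 + b2) at 1 by lia.
      apply colless_mb_balanced_split; unfold absdiff; lia. }
    assert (Hn : colless_mb n = join_cost (a1 + b1) (a2 + b2)
                                + colless_mb (a1 + b1) + colless_mb (a2 + b2)).
    { replace n with ((a1 + b1) + (a2 + b2)) by lia.
      apply colless_mb_balanced_split; unfold absdiff; lia. }
    pose proof (IH (a1 + b1) ltac:(lia) a1 b1 eq_refl) as IH1.
    pose proof (IH (a2 + b2) ltac:(lia) a2 b2 eq_refl) as IH2.
    pose proof (join_cost_exchange a1 a2 b1 b2 ltac:(lia) ltac:(lia)) as Hx.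
    replace (a1 + a2) with a in Hx by lia. replace (b1 + b2) with b in Hx by lia.
    lia.
Qed.

(* T, Ta, Tb range over the (unique up to isomorphism) maximally balanced
   trees with n, na, nb leaves respectively. *)
Theorem lemma3 (n na nb : nat) (T Ta Tb : btree) :
  2 <= n -> 1 <= nb -> nb <= na -> na + nb = n ->
  max_balanced T -> leaves T = n ->
  max_balanced Ta -> leaves Ta = na ->
  max_balanced Tb -> leaves Tb = nb ->
  colless T <= colless Ta + colless Tb + (na - nb).
Proof.
  intros _ Hnb Hba Hn HT LT HTa LTa HTb LTb.
  rewrite !colless_max_balanced, LT, LTa, LTb by assumption.
  replace (na - nb) with (join_cost na nb)
    by (rewrite join_cost_pos by lia; unfold absdiff; lia).
  subst n. apply colless_mb_join.
Qed.
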